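(* Let $G=(V,E)$ be an $n$-node graph, $\mathcal{C}$ a clustering of $G$ produced by $\mathbf{cluster}(G,e)$ for some integer $e \ge 1$, and $d, m$ positive integers (with $d$ possibly $\infty$). Let $\mathcal{S}$ be the output of $\mathbf{createStrips}(G, \mathcal{C}, d, m)$. Then the set of edges lying on paths in $\mathcal{S}$ contains only $O(n)$ edges that are incident on a clustered node (with the constant in $O(\cdot)$ independent of $G, e, d, m$).
   Context: $G$ is unweighted and undirected. For each pair of nodes $u,v$ a shortest path $\rho_G(u,v)$ is fixed, the choice being consistent and such that any two chosen shortest paths intersect on at most one (contiguous) subpath. The procedure $\mathbf{cluster}(G,e)$: initialize $\mathcal{C} = \emptyset$, unmark all nodes; while there is an unmarked node $u$ with at least $e-1$ unmarked neighbors, let $C$ be $u$ together with any $e-1$ of its unmarked neighbors, mark all nodes of $C$, add $C$ to $\mathcal{C}$; return $\mathcal{C}$. Elements of $\mathcal{C}$ are clusters; a node is clustered if it lies in some cluster, unclustered otherwise. The procedure $\mathbf{createStrips}(G,\mathcal{C},d,m)$: initialize $\mathcal{S}=\emptyset$; while there exist $u,v \in V$ such that (1) $\delta_G(u,v) \le d$, (2) $\rho_G(u,v)$ intersects (shares a node with) at most $m$ different paths in $\mathcal{S}$, and (3) $\rho_G(u,v)$ intersects exactly $m$ clusters that share no node with any path in $\mathcal{S}$, add $\rho_G(u,v)$ to $\mathcal{S}$; return $\mathcal{S}$. The paths in $\mathcal{S}$ are called strips. *)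

From mathcomp Require Import all_boot.
Set Implicit Arguments. Unset Strict Implicit. Unset Printing Implicit Defensive.

Section Defs.
Variable T : finType.
Variable adj : rel T.

Definition simple_graph : Prop := symmetric adj /\ irreflexive adj.

(* a walk from u to v is  u :: p  with  path adj u p  and  last u p = v;
   its length (number of edges) is  size p *)
Definition walk (u v : T) (p : seq T) : bool := path adj u p && (last u p == v).

Definition connected_nodes (u v : T) : Prop := exists p, walk u v p.

(* delta_G(u,v) <= d, where d = None encodes d = infinity
   (then the condition only requires delta_G(u,v) < infinity) *)
Definition dist_le (u v : T) (d : option nat) : Prop :=
  match d with
  | Some k => exists p, walk u v p /\ size p <= k
  | None => connected_nodes u v
  end.

Definition shortest_paths_choice (rho : T -> T -> seq T) : Prop :=
  forall u v, connected_nodes u v ->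
    exists p, rho u v = u :: p /\ walk u v p /\
      forall q, walk u v q -> size p <= size q.

Definition consistent_choice (rho : T -> T -> seq T) : Prop :=
  forall u v, connected_nodes u v ->
    forall i j, i <= j -> j < size (rho u v) ->
      rho (nth u (rho u v) i) (nth u (rho u v) j) = drop i (take j.+1 (rho u v)).

(* any two chosen paths intersect on at most one contiguous subpath *)
Definition single_intersection (rho : T -> T -> seq T) : Prop :=
  forall u v u' v', connected_nodes u v -> connected_nodes u' v' ->
    infix [seq x <- rho u v | x \in rho u' v'] (rho u v).

Definition marked_by (Cs : seq {set T}) : {set T} := \bigcup_(C <- Cs) C.

(* one iteration of the while loop, given the current set of marked nodes *)
Definition cluster_step (e : nat) (marked : {set T}) (C : {set T}) : Prop :=
  exists u, [/\ u \in C, u \notin marked,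
    C :\ u \subset [set w | adj u w & w \notin marked] & #|C :\ u| = e.-1].

(* loop guard is false *)
Definition cluster_final (e : nat) (marked : {set T}) : Prop :=
  forall u, u \notin marked -> #|[set w | adj u w & w \notin marked]| < e.-1.

(* Cs (in order of creation) is a possible output of cluster(G, e) *)
Definition cluster_output (e : nat) (Cs : seq {set T}) : Prop :=
  (forall i, i < size Cs -> cluster_step e (marked_by (take i Cs)) (nth set0 Cs i))
  /\ cluster_final e (marked_by Cs).

Definition meets (p q : seq T) : bool := has (fun x => x \in q) p.
Definition meets_set (C : {set T}) (p : seq T) : bool := has (fun x => x \in C) p.

(* the loop condition (1)-(3) for the pair (u, v), given current strips S *)
Definition strip_cond (rho : T -> T -> seq T) (Cs : seq {set T})
    (d : option nat) (m : nat) (S : seq (seq T)) (u v : T) : Prop :=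
  [/\ dist_le u v d,
      size (undup [seq s <- S | meets (rho u v) s]) <= m &
      count (fun C => meets_set C (rho u v) && ~~ has (meets_set C) S) Cs = m].

(* S (in order of insertion) is a possible output of createStrips(G,C,d,m) *)
Definition strips_output (rho : T -> T -> seq T) (Cs : seq {set T})
    (d : option nat) (m : nat) (S : seq (seq T)) : Prop :=
  (forall i, i < size S -> exists u v,
      strip_cond rho Cs d m (take i S) u v /\ nth [::] S i = rho u v)
  /\ (forall u v, ~ strip_cond rho Cs d m S u v).

Definition clustered (Cs : seq {set T}) (x : T) : bool := x \in marked_by Cs.

Definition strip_edges_at_clustered (Cs : seq {set T}) (S : seq (seq T)) : {set {set T}} :=
  [set [set x; y] | x in T, y in T &
     has (fun s => infix [:: x; y] s) S && (clustered Cs x || clustered Cs y)].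
End Defs.

(* Every strip is a chosen shortest path, hence chordless: two nodes of a strip that are
   adjacent in G are consecutive on it.  Walk along a new strip and look at an edge xy not
   already on an earlier strip.  Either x is a node not yet covered by earlier strips
   (charge the edge to x; every node gets at most two charges over the whole walk), or x
   lies on an earlier strip s' with y off s'; since the new strip meets s' in a single
   contiguous piece, the walk never returns to s', so this happens at most once per earlier
   strip met, i.e. at most m times.  Hence all strips together carry at most 2n + m|S|
   edges.  Each strip touches m clusters untouched by earlier strips, so m|S| is at most the
   number of clusters, and each cluster contains a node marked by it, so there are at most n
   clusters. *)

From mathcomp Require Import all_boot.
From mathcomp Require Import zify.
Set Implicit Arguments. Unset Strict Implicit. Unset Printing Implicit Defensive.

Lemma cardsU_setD (T : finType) (A B : {set T}) : #|A :|: B| = #|A| + #|B :\: A|.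
Proof. by rewrite cardsU cardsD setIC addnBA // subset_leq_card // subsetIl. Qed.

Lemma card_setU_mem_seq (T : finType) (O : {set T}) (s : seq T) : uniq s ->
  #|O :|: [set z | z \in s]| = #|O| + count [predC O] s.
Proof.
elim: s => [_|x s IHs /andP[xs Us]].
  by rewrite addn0; apply: eq_card => z; rewrite !inE orbF.
have -> : O :|: [set z | z \in x :: s] = x |: (O :|: [set z | z \in s]).
  by apply/setP => z; rewrite !inE orbCA.
by rewrite cardsU1 IHs // !inE (negbTE xs) orbF addnCA.
Qed.

Lemma size_undup_filter_le (X : eqType) (l : seq X) (P Q : pred X) :
  subpred P Q -> size (undup (filter P l)) <= size (undup (filter Q l)).
Proof.
move=> PQ; apply: uniq_leq_size; first exact: undup_uniq.
by move=> a; rewrite !mem_undup !mem_filter => /andP[/PQ -> ->].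
Qed.

Lemma size_undup_filter_lt (X : eqType) (l : seq X) (P Q : pred X) a :
  subpred P Q -> a \in l -> Q a -> ~~ P a ->
  size (undup (filter P l)) < size (undup (filter Q l)).
Proof.
move=> PQ al Qa Pa; rewrite -/(size (a :: _)); apply: uniq_leq_size.
  by rewrite /= undup_uniq mem_undup mem_filter (negbTE Pa).
move=> b; rewrite inE !mem_undup !mem_filter.
by case/orP => [/eqP->|/andP[/PQ -> ->]]; rewrite ?Qa ?al.
Qed.

Lemma infix_filter_behead (X : eqType) (P : pred X) x s : uniq (x :: s) ->
  infix (filter P (x :: s)) (x :: s) -> infix (filter P s) s.
Proof.
move=> /andP[xNs _]; rewrite [filter P _]/=.
case Px: (P x); rewrite infix_consl.
- case/orP => [|fs]; first by rewrite prefix_cons eqxx => /prefixW.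
  by move: (mem_infix fs (mem_head x _)); rewrite (negbTE xNs).
- case Ef: (filter P s) => [|a f]; first by rewrite infix0s.
  case/orP => [|//]; rewrite prefix_cons => /andP[/eqP ax _].
  have : a \in filter P s by rewrite Ef mem_head.
  by rewrite mem_filter ax (negbTE xNs) andbF.
Qed.

Lemma infix_filter_exit (X : eqType) (P : pred X) x y s : uniq (x :: y :: s) ->
  infix (filter P (x :: y :: s)) (x :: y :: s) -> P x -> ~~ P y -> ~~ has P s.
Proof.
move=> Uxys + Px Py; rewrite [filter P _]/= Px (negbTE Py) infix_consl.
case/orP => [|fs].
- rewrite prefix_cons eqxx /= has_filter; case Ef: (filter P s) => [|a f] //.
  move=> /andP[/eqP ay _]; have : a \in filter P s by rewrite Ef mem_head.
  by rewrite mem_filter ay (negbTE Py).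
- move: (mem_infix fs (mem_head x _)); move: Uxys => /= /andP[].
  by rewrite inE => /negbTE ->.
Qed.

Section PathEdges.
Variable T : finType.

Fixpoint edges (s : seq T) : {set {set T}} :=
  if s is x :: t then (if t is y :: _ then [set x; y] |: edges t else set0) else set0.

Lemma mem_edges_infix s x y : infix [:: x; y] s -> [set x; y] \in edges s.
Proof.
elim: s => [//|a t IHt]; rewrite infix_consl => /orP[|/IHt].
- case: t {IHt} => [|b t] /=; first by rewrite andbF.
  by move=> /and3P[/eqP-> /eqP-> _]; rewrite setU11.
- by case: t {IHt} => [|b t] xy_t; [rewrite inE in xy_t | rewrite /= setU1r].
Qed.

Lemma card_edges_cons2D (E : {set {set T}}) x y t :
  #|edges [:: x, y & t] :\: E| <= ([set x; y] \notin E) + #|edges (y :: t) :\: E|.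
Proof.
rewrite [edges _]/= setDUl; apply: leq_trans (leq_card_setU _ _) _.
rewrite leq_add2r; case: (boolP ([set x; y] \in E)) => xyE /=.
  by rewrite leqn0 cards_eq0 setD_eq0 sub1set.
by rewrite -(cards1 [set x; y]) subset_leq_card // subsetDl.
Qed.

End PathEdges.

Section Geodesics.
Variables (T : finType) (adj : rel T).

Definition shortest (x : T) (p : seq T) :=
  path adj x p /\ forall q, path adj x q -> last x q = last x p -> size p <= size q.

Lemma shortest_uniq x p : shortest x p -> uniq (x :: p).
Proof.
case=> p_path minp; move: (shortenP p_path); move E: (last x p) => y sp.
case: sp E => p' p'_path Up' sub_p' last_p'.
apply: (leq_size_uniq Up').
  by move=> z; rewrite !inE => /orP[->//|/sub_p' ->]; rewrite orbT.
by rewrite /= ltnS; apply: minp; rewrite // last_p'.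
Qed.

Lemma shortest_no_shortcut x p a y b z c :
  shortest x p -> x :: p = a ++ y :: b ++ z :: c -> adj y z -> b = [::].
Proof.
case=> p_path minp; case: b => [//|b0 b] Ep yz; exfalso.
case: a Ep => [|x' a] /= [Ex Ep]; subst.
- move: p_path; rewrite -cat_cons cat_path => /andP[_ /= /andP[_ zc]].
  have := minp (z :: c); rewrite /= yz zc last_cat /= size_cat /=.
  by move=> /(_ erefl erefl); lia.
- move: p_path; rewrite cat_path => /andP[a_path /= /and3P[ay _]].
  rewrite cat_path => /andP[_ /= /andP[_ zc]].
  have := minp (a ++ y :: z :: c).
  rewrite cat_path a_path /= ay yz zc !last_cat /= last_cat /= !size_cat /=.
  by move=> /(_ erefl erefl); rewrite size_cat /=; lia.
Qed.

Hypotheses (adj_sym : symmetric adj) (adj_irr : irreflexive adj).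

Lemma shortest_adj_infix x p y z : shortest x p ->
  y \in x :: p -> z \in x :: p -> adj y z ->
  infix [:: y; z] (x :: p) || infix [:: z; y] (x :: p).
Proof.
move=> sp + + yz; have zy : adj z y by rewrite adj_sym.
have zNy : (z == y) = false by apply/eqP => zy_eq; move: yz; rewrite zy_eq adj_irr.
move Eq: (x :: p) => q y_q; case/splitPr: y_q Eq => a t Eq.
rewrite mem_cat inE zNy /= => /orP[z_a | z_t].
- move: Eq; case/splitPr: z_a => a1 a2; rewrite -catA cat_cons => Eq.
  rewrite (shortest_no_shortcut sp Eq zy).
  by apply/orP; right; apply/infixP; exists a1, t.
- move: Eq; case/splitPr: z_t => b c Eq.
  rewrite (shortest_no_shortcut sp Eq yz).
  by apply/orP; left; apply/infixP; exists a, c.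
Qed.

Lemma shortest_adj_edges x p y z : shortest x p ->
  y \in x :: p -> z \in x :: p -> adj y z -> [set y; z] \in edges (x :: p).
Proof.
move=> sp y_p z_p yz.
by case/orP: (shortest_adj_infix sp y_p z_p yz) => /mem_edges_infix //; rewrite setUC.
Qed.

End Geodesics.

Definition strip_nodes (T : finType) (St : seq (seq T)) : {set T} :=
  [set z | has (fun s => z \in s) St].

Definition strip_edges (T : finType) (St : seq (seq T)) : {set {set T}} :=
  [set ed | has (fun s => ed \in edges s) St].

Definition strips_met (T : finType) (St : seq (seq T)) (s : seq T) : nat :=
  size (undup [seq s' <- St | meets s s']).

Section Charging.
Variables (T : finType) (adj : rel T) (St : seq (seq T)).
Hypothesis strip_chords : forall s', s' \in St ->
  forall y z, y \in s' -> z \in s' -> adj y z -> [set y; z] \in strip_edges St.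

Local Notation O := (strip_nodes St).
Local Notation E := (strip_edges St).

Lemma strips_met_cons x r : strips_met St r <= strips_met St (x :: r).
Proof. by apply: size_undup_filter_le => s'; rewrite /meets /= => ->; rewrite orbT. Qed.

Lemma strips_met_leave x y r : uniq [:: x, y & r] -> adj x y ->
  (forall s', s' \in St -> infix [seq z <- [:: x, y & r] | z \in s'] [:: x, y & r]) ->
  x \in O -> [set x; y] \notin E -> strips_met St (y :: r) < strips_met St [:: x, y & r].
Proof.
move=> Uxyr xy single_meet; rewrite inE => /hasP[s' s'_St x_s'] xyNE.
have y_s' : y \notin s'.
  by apply: contra xyNE => y_s'; exact: strip_chords s'_St _ _ x_s' y_s' xy.
have rNs' := infix_filter_exit Uxyr (single_meet s' s'_St) x_s' y_s'.
apply: (size_undup_filter_lt (a := s')) => //.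
- by move=> s; rewrite /meets /= => ->; rewrite orbT.
- by rewrite /meets /= x_s'.
- by rewrite /meets /= negb_or y_s'.
Qed.

(* The summand [x \notin O] is the charge a new first node still has in reserve. *)
Lemma card_new_edges x r : path adj x r -> uniq (x :: r) ->
  (forall s', s' \in St -> infix [seq z <- x :: r | z \in s'] (x :: r)) ->
  #|edges (x :: r) :\: E| + (x \notin O) <=
    2 * count [predC O] (x :: r) + strips_met St (x :: r).
Proof.
elim: r x => [|y r IHr] x xr_path Uxr single_meet.
  by rewrite /= set0D cards0; lia.
case/andP: xr_path => xy yr_path; have Uyr : uniq (y :: r) by case/andP: Uxr.
have IHyr := IHr y yr_path Uyr
  (fun s' s'_St => infix_filter_behead Uxr (single_meet s' s'_St)).
have met_le := strips_met_cons x (y :: r).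
have new_xy := card_edges_cons2D E x y r.
suff charge : ([set x; y] \notin E) + strips_met St (y :: r) <=
    (x \notin O) + (y \notin O) + strips_met St [:: x, y & r].
  have count_cons z s : count [predC O] (z :: s) = (z \notin O) + count [predC O] s by [].
  move: IHyr new_xy charge; rewrite !count_cons.
  by move: (x \notin O) (y \notin O) ([set x; y] \notin E) => a b c; lia.
case: (boolP ([set x; y] \in E)) => [_ | xyNE] /=.
  by rewrite add0n (leq_trans met_le) // leq_addl.
case: (boolP (x \in O)) => [xO | _] /=.
  by rewrite add1n (leq_trans (strips_met_leave Uxr xy single_meet xO xyNE)) // leq_addl.
by rewrite -addnA leq_add2l (leq_trans met_le) // leq_addl.
Qed.

Lemma card_strip_edges_rcons x p : path adj x p -> uniq (x :: p) ->
  (forall s', s' \in St -> infix [seq z <- x :: p | z \in s'] (x :: p)) ->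
  #|strip_edges (rcons St (x :: p))| + 2 * #|O| <=
    #|E| + 2 * #|strip_nodes (rcons St (x :: p))| + strips_met St (x :: p).
Proof.
move=> xp_path Uxp single_meet.
have -> : strip_edges (rcons St (x :: p)) = E :|: edges (x :: p).
  by apply/setP => ed; rewrite !inE has_rcons orbC.
have -> : strip_nodes (rcons St (x :: p)) = O :|: [set z | z \in x :: p].
  by apply/setP => z; rewrite !inE has_rcons orbC.
rewrite cardsU_setD card_setU_mem_seq //.
have := card_new_edges xp_path Uxp single_meet.
by move: (x \notin O) => a; lia.
Qed.

End Charging.

Lemma count_or_split (X : Type) (P Q : pred X) (s : seq X) :
  count (fun x => P x || Q x) s = count P s + count (fun x => Q x && ~~ P x) s.
Proof. by elim: s => [//|a s IHs] /=; rewrite IHs; case: (P a); case: (Q a) => /=; lia. Qed.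

Lemma dist_le_connected (T : finType) (adj : rel T) u v d :
  dist_le adj u v d -> connected_nodes adj u v.
Proof. by case: d => [k [p [uv_walk _]]|//]; exists p. Qed.

Lemma chosen_path_shortest (T : finType) (adj : rel T) rho u v :
  shortest_paths_choice adj rho -> connected_nodes adj u v ->
  exists p, rho u v = u :: p /\ shortest adj u p.
Proof.
move=> rho_shortest uv_conn.
have [p [-> [/andP[p_path /eqP p_last] minp]]] := rho_shortest u v uv_conn.
exists p; split=> //; split=> // q q_path q_last; apply: minp.
by rewrite /walk q_path q_last p_last eqxx.
Qed.

Lemma size_cluster_output (T : finType) (adj : rel T) e Cs :
  cluster_output adj e Cs -> size Cs <= #|T|.
Proof.
case=> steps _; suff marked_ge i : i <= size Cs -> i <= #|marked_by (take i Cs)|.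
  exact: leq_trans (marked_ge _ (leqnn _)) (max_card _).
elim: i => [//|i IHi] lt_i; have [u [uC uNmarked _ _]] := steps i lt_i.
rewrite (take_nth set0 lt_i) /marked_by -cats1 big_cat big_seq1 /=.
apply: (@leq_trans #|u |: marked_by (take i Cs)|).
  by rewrite cardsU1 uNmarked add1n ltnS IHi // ltnW.
apply: subset_leq_card; apply/subsetP => z.
by rewrite !inE => /orP[/eqP->|->]; rewrite ?uC ?orbT.
Qed.

Section Strips.
Variables (T : finType) (adj : rel T) (rho : T -> T -> seq T).
Variables (Cs : seq {set T}) (d : option nat) (m : nat) (S : seq (seq T)).
Hypotheses (adj_sym : symmetric adj) (adj_irr : irreflexive adj).
Hypothesis rho_shortest : shortest_paths_choice adj rho.
Hypothesis rho_single : single_intersection adj rho.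
Hypothesis strips_steps : forall i, i < size S -> exists u v,
  strip_cond adj rho Cs d m (take i S) u v /\ nth [::] S i = rho u v.

Lemma mem_strips s : s \in S -> exists u v, connected_nodes adj u v /\ s = rho u v.
Proof.
move=> sS; have lt_s : index s S < size S by rewrite index_mem.
have [u [v [[uv_dist _ _] Si]]] := strips_steps lt_s.
by exists u, v; split; [exact: dist_le_connected uv_dist | rewrite -Si nth_index].
Qed.

Lemma prefix_strip_chords i s' : s' \in take i S ->
  forall y z, y \in s' -> z \in s' -> adj y z -> [set y; z] \in strip_edges (take i S).
Proof.
move=> s'_St y z y_s' z_s' yz; rewrite inE; apply/hasP; exists s' => //.
have [u [v [uv_conn Es']]] := mem_strips (mem_take s'_St).
have [p [rho_uv sp]] := chosen_path_shortest rho_shortest uv_conn.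
rewrite Es' rho_uv in y_s' z_s' *; exact: shortest_adj_edges.
Qed.

Lemma card_strip_edges_prefix i : i <= size S ->
  #|strip_edges (take i S)| <= 2 * #|strip_nodes (take i S)| + m * i.
Proof.
elim: i => [_ | i IHi lt_i].
  by rewrite take0 (_ : strip_edges [::] = set0) ?cards0 //; apply/setP => ed; rewrite !inE.
have [u [v [[uv_dist met_le _] Si]]] := strips_steps lt_i.
have uv_conn := dist_le_connected uv_dist.
have [p [rho_uv sp]] := chosen_path_shortest rho_shortest uv_conn.
have single_meet s' : s' \in take i S -> infix [seq z <- u :: p | z \in s'] (u :: p).
  move=> /mem_take /mem_strips[u' [v' [uv'_conn ->]]].
  by rewrite -rho_uv; exact: rho_single.
have := card_strip_edges_rcons (@prefix_strip_chords i) sp.1 (shortest_uniq sp)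
  single_meet.
rewrite (take_nth [::] lt_i) Si rho_uv mulnS.
rewrite rho_uv in met_le; have := IHi (ltnW lt_i); rewrite /strips_met; lia.
Qed.

Lemma count_touched_prefix i : i <= size S ->
  count (fun C => has (meets_set C) (take i S)) Cs = m * i.
Proof.
elim: i => [_ | i IHi lt_i].
  by rewrite take0 muln0 -(count_pred0 Cs); apply: eq_count.
have [u [v [[_ _ new_touched] Si]]] := strips_steps lt_i.
rewrite (take_nth [::] lt_i) Si mulnS -(IHi (ltnW lt_i)) -new_touched addnC.
by rewrite -count_or_split; apply: eq_count => C; rewrite has_rcons orbC.
Qed.

Lemma strip_edges_at_clustered_sub : strip_edges_at_clustered Cs S \subset strip_edges S.
Proof.
apply/subsetP => ed /imset2P[x y _ xy_S ->]; rewrite inE.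
by move: xy_S; rewrite inE => /and3P[_ + _]; apply: sub_has => s /mem_edges_infix.
Qed.

End Strips.

Theorem lemma1 :
  exists c : nat,
  forall (T : finType) (adj : rel T) (rho : T -> T -> seq T)
         (e : nat) (d : option nat) (m : nat)
         (Cs : seq {set T}) (S : seq (seq T)),
    simple_graph adj ->
    shortest_paths_choice adj rho ->
    consistent_choice adj rho ->
    single_intersection adj rho ->
    1 <= e ->
    (forall k, d = Some k -> 1 <= k) ->
    1 <= m ->
    cluster_output adj e Cs ->
    strips_output adj rho Cs d m S ->
    #|strip_edges_at_clustered Cs S| <= c * #|T|.
Proof.
exists 3 => T adj rho e d m Cs S [adj_sym adj_irr] rho_shortest _ rho_single _ _ _
  clusters [strips_steps _].
have edges_le := card_strip_edges_prefix adj_sym adj_irr rho_shortest rho_single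
  strips_steps (leqnn (size S)).
have touched := count_touched_prefix strips_steps (leqnn (size S)).
rewrite take_size in edges_le touched.
have touched_le : m * size S <= #|T|.
  by rewrite -touched (leq_trans (count_size _ _)) // (size_cluster_output clusters).
have nodes_le : #|strip_nodes S| <= #|T| := max_card _.
have := subset_leq_card (strip_edges_at_clustered_sub Cs S).
by lia.
Qed.
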